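(* Let $K$ be a field with pairwise commuting derivations $\frac{d}{dx_1},\dots,\frac{d}{dx_k}$ and field of constants $C$. Then $$C(\partial_1,\dots,\partial_k)=\{x\in K(\partial_1,\dots,\partial_k)\mid x\partial_j=\partial_jx\ \text{for all }1\le j\le k\}.$$
   Context: $C=\{f\in K\mid \frac{d}{dx_i}f=0\ \forall i\}$. $K[\partial_1,\dots,\partial_k]$ is the ring of differential polynomials with usual addition and multiplication determined by $\partial_i\partial_j=\partial_j\partial_i$ and $\partial_ia=a\partial_i+\frac{d}{dx_i}(a)$ for $a\in K$; it satisfies the left Ore condition and $K(\partial_1,\dots,\partial_k)$ is its left division ring of fractions. $C(\partial_1,\dots,\partial_k)$ denotes the sub-division ring of $K(\partial_1,\dots,\partial_k)$ consisting of left fractions of elements of $C[\partial_1,\dots,\partial_k]$ (a commutative field, isomorphic to the rational function field over $C$ in $k$ variables). *)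

From HB Require Import structures.
From mathcomp Require Import all_boot all_order all_algebra.
From mathcomp Require Export mpoly.
Set Implicit Arguments. Unset Strict Implicit. Unset Printing Implicit Defensive.
Import GRing.Theory.
Local Open Scope ring_scope.

Definition is_derivation (K : fieldType) (d : K -> K) : Prop :=
  (forall a b, d (a + b) = d a + d b) /\ (forall a b, d (a * b) = d a * b + a * d b).

Definition commuting_derivations (K : fieldType) (k : nat) (delta : 'I_k -> K -> K) : Prop :=
  (forall i, is_derivation (delta i)) /\
  (forall i j a, delta i (delta j a) = delta j (delta i a)).

Definition is_const (K : fieldType) (k : nat) (delta : 'I_k -> K -> K) (a : K) : Prop :=
  forall i, delta i a = 0.

Definition is_division_ring (D : unitRingType) : Prop :=
  forall x : D, x != 0 -> x \is a GRing.unit.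

Definition dmon (D : unitRingType) (k : nat) (d : 'I_k -> D) (m : 'X_{1..k}) : D :=
  \prod_(i < k) d i ^+ m i.

(* the element  sum_m iota(p_m) d^m  of D: the differential polynomial with
   (left) coefficients given by p, realised inside D *)
Definition dpoly (K : fieldType) (D : unitRingType) (k : nat) (iota : K -> D)
  (d : 'I_k -> D) (p : {mpoly K[k]}) : D :=
  \sum_(m <- msupp p) iota (p@_m) * dmon d m.

(* (D, iota, d) realises the left division ring of fractions K(d_1..d_k) of the
   ring of differential polynomials K[d_1..d_k]:
   - D is a division ring, iota : K -> D a ring embedding;
   - d_i d_j = d_j d_i and d_i a = a d_i + (d/dx_i) a  for a in K;
   - the monomials d^m are left K-linearly independent (so the subring
     generated is exactly K[d_1..d_k]);
   - every element of D is a left fraction s^-1 r with r, s in K[d], s <> 0. *)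
Definition left_diff_fraction_field (K : fieldType) (k : nat)
  (delta : 'I_k -> K -> K) (D : unitRingType) (iota : {rmorphism K -> D})
  (d : 'I_k -> D) : Prop :=
  [/\ is_division_ring D,
      (forall i j, d i * d j = d j * d i),
      (forall i a, d i * iota a = iota a * d i + iota (delta i a)),
      injective (dpoly iota d) &
      (forall x : D, exists s r : {mpoly K[k]},
          s != 0 /\ x = (dpoly iota d s)^-1 * dpoly iota d r)].

Definition const_coef (K : fieldType) (k : nat) (delta : 'I_k -> K -> K)
  (p : {mpoly K[k]}) : Prop :=
  forall m, is_const delta (p@_m).

From Pilot Require Import Defs.
From HB Require Import structures.
From mathcomp Require Import all_boot all_order all_algebra.
From mathcomp Require Import mpoly.
Import GRing.Theory.
Local Open Scope ring_scope.
Set Implicit Arguments. Unset Strict Implicit.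

(* Constant-coefficient fractions commute with every d_j because [d_j, p(d)]
   is the differential polynomial obtained by differentiating the coefficients
   of p.  Conversely, let x commute with all d_j and call s a left denominator
   of x when s(d) x lies in K[d].  Among the nonzero left denominators take one
   with fewest monomials and normalise one coefficient to 1.  Since x commutes
   with d_j, the coefficientwise derivative of a left denominator is again one,
   and it has fewer monomials; so by minimality all its coefficients are
   constant.  Writing s(d) x = q(d), the same commutator identity and the
   injectivity of p |-> p(d) then force q to have constant coefficients too. *)

Section Derivation.
Variables (K : fieldType) (dl : K -> K).
Hypothesis dlP : is_derivation dl.

Lemma derivationD : {morph dl : a b / a + b}.
Proof. by case: dlP. Qed.

Lemma derivation0 : dl 0 = 0.
Proof. by apply: (addrI (dl 0)); rewrite -derivationD !addr0. Qed.

Lemma derivation1 : dl 1 = 0.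
Proof.
have [_ dlM] := dlP; have := dlM 1 1; rewrite !mulr1 mul1r => dl1.
by apply: (addrI (dl 1)); rewrite addr0 -dl1.
Qed.

Definition derivation_additive : {additive K -> K} :=
  HB.pack_for {additive K -> K} dl
    (GRing.isNmodMorphism.Build K K dl (conj derivation0 derivationD)).

Variable k : nat.
Implicit Types (p : {mpoly K[k]}) (m : 'X_{1..k}).

Lemma mcoeff_map_derivation p m : (map_mpoly dl p)@_m = dl p@_m.
Proof. exact: (mcoeff_map_mpoly derivation_additive). Qed.

Lemma map_derivation_eq0 p : map_mpoly dl p = 0 <-> forall m, dl p@_m = 0.
Proof.
split=> [p0 m | p0]; first by rewrite -mcoeff_map_derivation p0 mcoeff0.
by apply/mpolyP => m; rewrite mcoeff_map_derivation p0 mcoeff0.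
Qed.

Lemma msupp_map_derivation p : {subset msupp (map_mpoly dl p) <= msupp p}.
Proof.
move=> m; rewrite !mcoeff_msupp mcoeff_map_derivation.
by apply: contraNN => /eqP ->; rewrite derivation0.
Qed.

Lemma size_msupp_map_derivation p m :
  m \in msupp p -> dl p@_m = 0 ->
  (size (msupp (map_mpoly dl p)) < size (msupp p))%N.
Proof.
move=> mp dlm; apply: (@uniq_leq_size _ (m :: _)) => [|m'].
  by rewrite /= msupp_uniq mcoeff_msupp mcoeff_map_derivation dlm eqxx.
by rewrite in_cons => /predU1P [-> //|/msupp_map_derivation].
Qed.

End Derivation.

Lemma const_coefP (K : fieldType) (k : nat) (delta : 'I_k -> K -> K)
    (p : {mpoly K[k]}) :
  (forall i, is_derivation (delta i)) ->
  const_coef delta p <-> forall i, map_mpoly (delta i) p = 0.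
Proof.
move=> delta_der; split=> [cp i | p0 m i].
  by apply/(map_derivation_eq0 (delta_der i)) => m; apply: cp.
exact: (map_derivation_eq0 (delta_der i) p).1.
Qed.

Section DifferentialPolynomials.
Variables (K : fieldType) (k : nat) (D : unitRingType).
Variables (iota : {rmorphism K -> D}) (d : 'I_k -> D).
Local Notation dpoly := (dpoly iota d).
Implicit Types (p q s : {mpoly K[k]}) (x : D).

Lemma dpolyE (ms : seq 'X_{1..k}) p :
  uniq ms -> {subset msupp p <= ms} ->
  dpoly p = \sum_(m <- ms) iota p@_m * dmon d m.
Proof.
move=> ms_uniq pms; rewrite /Defs.dpoly.
rewrite [RHS](bigID (mem (msupp p))) /= [X in _ + X]big1 ?addr0 => [|m].
  rewrite -[RHS]big_filter; apply/perm_big/uniq_perm => [||m].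
  - exact: msupp_uniq.
  - exact: filter_uniq.
  - by rewrite mem_filter; case: (boolP (m \in msupp p)) => // /pms ->.
by rewrite mcoeff_msupp negbK => /eqP ->; rewrite rmorph0 mul0r.
Qed.

Lemma dpoly0 : dpoly 0 = 0.
Proof. by rewrite /Defs.dpoly msupp0 big_nil. Qed.

Lemma dpolyZ a p : dpoly (a *: p) = iota a * dpoly p.
Proof.
rewrite (@dpolyE (msupp p)) ?msupp_uniq //; last exact: msuppZ_le.
by rewrite mulr_sumr; apply: eq_bigr => m _; rewrite mcoeffZ rmorphM mulrA.
Qed.

Lemma dpoly_unit p :
  is_division_ring D -> injective dpoly -> p != 0 -> dpoly p \is a GRing.unit.
Proof.
move=> divD dpoly_inj p0; apply: divD; apply: contra_neq p0 => p0.
by apply: dpoly_inj; rewrite p0 dpoly0.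
Qed.

Hypothesis d_comm : forall i j, d i * d j = d j * d i.

Lemma commr_dmon j m : GRing.comm (d j) (dmon d m).
Proof. by apply: commr_prod => i _; apply/commrX/d_comm. Qed.

Variable delta : 'I_k -> K -> K.
Hypothesis delta_der : forall i, is_derivation (delta i).
Hypothesis d_iota : forall i a, d i * iota a = iota a * d i + iota (delta i a).

Lemma dpoly_commutator j p :
  d j * dpoly p - dpoly p * d j = dpoly (map_mpoly (delta j) p).
Proof.
rewrite [RHS](@dpolyE (msupp p)) ?msupp_uniq //; last exact: msupp_map_derivation.
rewrite /Defs.dpoly mulr_sumr mulr_suml -sumrB; apply: eq_bigr => m _.
rewrite mulrA d_iota mulrDl -!mulrA commr_dmon addrAC subrr add0r.
by rewrite mcoeff_map_derivation.
Qed.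

Lemma commr_dpoly_const j p : const_coef delta p -> GRing.comm (d j) (dpoly p).
Proof.
move=> /(const_coefP _ delta_der)/(_ j) p0; apply/eqP; rewrite -subr_eq0.
by rewrite dpoly_commutator p0 dpoly0.
Qed.

Definition left_denominator x s := exists q, dpoly s * x = dpoly q.

Lemma left_denominatorZ x a s :
  left_denominator x s -> left_denominator x (a *: s).
Proof. by case=> q sxq; exists (a *: q); rewrite !dpolyZ -mulrA sxq. Qed.

Lemma left_denominator_map x j s :
  GRing.comm x (d j) -> left_denominator x s ->
  left_denominator x (map_mpoly (delta j) s).
Proof.
move=> xdj [q sxq]; exists (map_mpoly (delta j) q).
by rewrite -!dpoly_commutator -sxq mulrBl -!mulrA xdj.
Qed.

Lemma exists_const_left_denominator x s :
  (forall j, GRing.comm x (d j)) -> s != 0 -> left_denominator x s ->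
  exists2 s', s' != 0 & const_coef delta s' /\ left_denominator x s'.
Proof.
move=> xd; have [n] := ubnP (size (msupp s)); elim: n s => // n IH s.
rewrite ltnS => sz s0 xs.
have [m0 m0s] : exists m0, m0 \in msupp s.
  move: s0; rewrite -msupp_eq0; case: (msupp s) => // m0 ms _.
  by exists m0; rewrite mem_head.
have c0 : s@_m0 != 0 by rewrite -mcoeff_msupp.
pose s1 := (s@_m0)^-1 *: s.
have s1m0 : s1@_m0 = 1 by rewrite mcoeffZ mulVf.
have m0s1 : m0 \in msupp s1 by rewrite mcoeff_msupp s1m0 oner_eq0.
have s10 : s1 != 0 by apply: contraTneq m0s1 => ->; rewrite msupp0.
have xs1 : left_denominator x s1 by apply: left_denominatorZ.
have [/forallP s1c | ] := boolP [forall j, map_mpoly (delta j) s1 == 0].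
  by exists s1 => //; split => //; apply/(const_coefP _ delta_der) => j; apply/eqP.
rewrite negb_forall => /existsP [j s1j]; apply: (IH (map_mpoly (delta j) s1)) => //.
  have sz1 : size (msupp s1) = size (msupp s) := perm_size (msuppZ _ (invr_neq0 c0)).
  apply: leq_trans sz; rewrite -sz1.
  by apply: (size_msupp_map_derivation (delta_der j) m0s1); rewrite s1m0 derivation1.
exact: left_denominator_map.
Qed.

Hypothesis dpoly_inj : injective dpoly.

Lemma const_numerator x s q :
  (forall j, GRing.comm x (d j)) -> const_coef delta s ->
  dpoly s * x = dpoly q -> const_coef delta q.
Proof.
move=> xd cs sxq; apply/(const_coefP _ delta_der) => j; apply: dpoly_inj.
rewrite dpoly0 -dpoly_commutator -sxq mulrA (commr_dpoly_const j cs).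
by rewrite -!mulrA xd subrr.
Qed.

End DifferentialPolynomials.

Unset Implicit Arguments. Set Strict Implicit.

Theorem mainTheorem18 (K : fieldType) (k : nat) (delta : 'I_k -> K -> K)
  (D : unitRingType) (iota : {rmorphism K -> D}) (d : 'I_k -> D) :
  commuting_derivations delta ->
  left_diff_fraction_field delta iota d ->
  forall x : D,
    (exists s r : {mpoly K[k]},
        [/\ const_coef delta s, const_coef delta r, s != 0 &
            x = (dpoly iota d s)^-1 * dpoly iota d r])
    <-> (forall j : 'I_k, x * d j = d j * x).
Proof.
(* The derivations need not commute with each other for this argument. *)
move=> [delta_der _] [divD d_comm d_iota dpoly_inj fracD] x.
have unit_dpoly p := @dpoly_unit _ _ _ iota d p divD dpoly_inj.
split=> [[s [r [cs cr s0 ->]]] j | xd].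
  have commr_const := commr_dpoly_const d_comm delta_der d_iota j.
  by apply/commr_sym/commrM; [apply/commrV/commr_const | apply/commr_const].
have [s [r [s0 xE]]] := fracD x.
have xs : left_denominator iota d x s by exists r; rewrite xE mulVKr ?unit_dpoly.
have [s' s'0 [cs' [q s'xq]]] :=
  exists_const_left_denominator d_comm delta_der d_iota xd s0 xs.
exists s', q; split=> //.
  exact: (const_numerator d_comm delta_der d_iota dpoly_inj xd cs' s'xq).
by rewrite -s'xq mulKr ?unit_dpoly.
Qed.
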